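(* Let $\mathcal{X},\mathcal{Y}$ be finite, $P_X$ a distribution, $P_{Y|X}$ a channel, $P_{XY}=P_XP_{Y|X}$ with $\mathcal{Y}$-marginal $P_Y$, and $R>I(P_X,P_{Y|X})>0$. Define \[ \alpha(R,P_X,P_{Y|X})=\min_{Q_{XY}}\Big\{D(Q_{XY}\|P_{XY})+\tfrac12\big[R-D(Q_{XY}\|P_XQ_Y)\big]_+\Big\}, \] \[ \beta(R,P_X,P_{Y|X})=\max_{\lambda\ge0}\max_{\lambda'\le1}\Big\{\frac{\lambda}{2\lambda+1-\lambda'}\Big(R-(1-\lambda')D_{1+\lambda}(P_{XY}\|P_XP_Y)-\lambda'\widetilde D_{1+\lambda'}(P_{XY}\|P_XP_Y)\Big)\Big\}. \] Then $\alpha(R,P_X,P_{Y|X})\ge\beta(R,P_X,P_{Y|X})$.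
   Context: $Q_Y$ is the $\mathcal{Y}$-marginal of $Q_{XY}$, $[f]_+=\max\{0,f\}$, $D$ is relative entropy. With $(X,Y)\sim P_{XY}$ and information density $\imath_{X;Y}(x;y)=\log\frac{P_{Y|X}(y|x)}{P_Y(y)}$: $D_{1+\lambda}(P_{XY}\|P_XP_Y)=\frac1\lambda\log\mathbb{E}[\exp(\lambda\,\imath_{X;Y}(X;Y))]$ (the Rényi divergence of order $1+\lambda$; at $\lambda=0$ it equals the mutual information), and $\widetilde D_{1+\lambda'}(P_{XY}\|P_XP_Y)=\frac{2}{\lambda'}\log\mathbb{E}\big[\mathbb{E}^{1/2}[\exp(\lambda'\,\imath_{X;Y}(X;Y))\mid Y]\big]$, so that $\lambda'\widetilde D_{1+\lambda'}=2\log\mathbb{E}\big[\mathbb{E}^{1/2}[\exp(\lambda'\imath_{X;Y}(X;Y))|Y]\big]$. Logs and exps use a common base. *)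

From HB Require Import structures.
From mathcomp Require Import all_boot all_order all_algebra.
From mathcomp Require Import reals.
From mathcomp.analysis Require Import sequences exp.
Set Implicit Arguments. Unset Strict Implicit. Unset Printing Implicit Defensive.
Import Order.TTheory GRing.Theory Num.Theory.
Local Open Scope ring_scope.

Section InfoDefs.
Variables (R : realType) (X Y : finType).

(* relative entropy D(Q||P) on a finite set, with 0 log 0 = 0;
   only used when Q << P (support of Q inside support of P) *)
Definition relent (T : finType) (Q P : T -> R) : R :=
  \sum_(t | Q t != 0) Q t * ln (Q t / P t).

Definition PXY (PX : X -> R) (W : X -> Y -> R) (p : X * Y) : R :=
  PX p.1 * W p.1 p.2.

Definition margY (Q : X * Y -> R) (y : Y) : R := \sum_(x : X) Q (x, y).

Definition prodXY (PX : X -> R) (QY : Y -> R) (p : X * Y) : R := PX p.1 * QY p.2.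

Definition MI (PX : X -> R) (W : X -> Y -> R) : R :=
  relent (PXY PX W) (prodXY PX (margY (PXY PX W))).

Definition idens (PX : X -> R) (W : X -> Y -> R) (p : X * Y) : R :=
  ln (W p.1 p.2 / margY (PXY PX W) p.2).

Definition renyiD (PX : X -> R) (W : X -> Y -> R) (lam : R) : R :=
  if lam == 0 then MI PX W
  else ln (\sum_(p | PXY PX W p != 0) PXY PX W p * expR (lam * idens PX W p)) / lam.

(* lam' * Dtilde_{1+lam'}(P_XY || P_X P_Y)
   = 2 log E[ E^{1/2}[exp(lam' i(X;Y)) | Y] ] *)
Definition lamDtilde (PX : X -> R) (W : X -> Y -> R) (lam' : R) : R :=
  let PY := margY (PXY PX W) in
  2 * ln (\sum_(y | PY y != 0) PY y *
            Num.sqrt (\sum_(x | PXY PX W (x, y) != 0)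
                        PXY PX W (x, y) / PY y * expR (lam' * idens PX W (x, y)))).

Definition alpha_obj (PX : X -> R) (W : X -> Y -> R) (Rt : R) (Q : X * Y -> R) : R :=
  relent Q (PXY PX W)
  + 2^-1 * Num.max 0 (Rt - relent Q (prodXY PX (margY Q))).

Definition beta_obj (PX : X -> R) (W : X -> Y -> R) (Rt lam lam' : R) : R :=
  lam / (2 * lam + 1 - lam') *
  (Rt - (1 - lam') * renyiD PX W lam - lamDtilde PX W lam').

End InfoDefs.

From HB Require Import structures.
From mathcomp Require Import all_boot all_order all_algebra.
From mathcomp Require Import reals.
From mathcomp.analysis Require Import sequences exp.
From mathcomp Require Import lra ring.
Import Order.TTheory GRing.Theory Num.Theory.
Local Open Scope ring_scope.

(* Everything follows from the Gibbs variational inequality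
   [E_q[f] - D(q||p) <= ln E_p[exp f]].  With [f = lam i] it gives
   [lam E_Q[i] - D(Q||P_XY) <= lam D_{1+lam}].  Applied for each [y] with
   [f = lam' i], and then once more to [Q_Y] against [P_Y] with the tilt
   [f = ln sqrt (S_y / P_Y(y))], where [S_y] is the conditional exponential
   moment, it gives [lam' E_Q[i] - D(Q||P_XY) - D(Q_Y||P_Y) <= lam' Dtilde_{1+lam'}].
   The chain rule [D(Q||P_X Q_Y) = D(Q||P_XY) + E_Q[i] - D(Q_Y||P_Y)] and
   [[x]_+ >= x] then turn [(1 - lam')] times the first bound plus [lam] times
   the second into [(2 lam + 1 - lam') beta_obj <= (2 lam + 1 - lam') alpha_obj]. *)

Section Gibbs.
Context {R : realType} {T : finType}.
Implicit Types (q p f s : T -> R).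

Lemma mul_ln_div_le (a b : R) : 0 <= a -> 0 <= b -> (b = 0 -> a = 0) ->
  a * ln (b / a) <= b - a.
Proof.
move=> a0 b0 ba; have [->|an0] := eqVneq a 0; first by rewrite mul0r subr0.
have ag : 0 < a by rewrite lt_def an0 a0.
have bg : 0 < b by rewrite lt_def b0 andbT; apply: contra an0 => /eqP/ba ->.
have ln_le : ln (b / a) <= b / a - 1.
  have := @le_ln1Dx R (b / a - 1); rewrite addrCA subrr addr0; apply.
  by rewrite ltrBrDl subrr divr_gt0.
apply: le_trans (ler_wpM2l (ltW ag) ln_le) _.
by rewrite mulrBr mulr1 mulrCA divff ?mulr1.
Qed.

Lemma relentE q p : relent q p = \sum_t q t * ln (q t / p t).
Proof.
by rewrite /relent big_mkcond; apply: eq_bigr => t _; case: eqP => // ->; rewrite mul0r.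
Qed.

Lemma gibbs_variational q p f :
  (forall t, 0 <= q t) -> (forall t, 0 <= p t) -> (forall t, p t = 0 -> q t = 0) ->
  \sum_t q t * (f t - ln (q t / p t)) <=
  (\sum_t q t) * ln ((\sum_(t | p t != 0) p t * expR (f t)) / \sum_t q t).
Proof.
move=> q0 p0 qp; set m := \sum_t q t; set S := \sum_(t | p t != 0) _.
have [m0|mn0] := eqVneq m 0.
  have qz t : q t = 0 by apply: (psumr_eq0P (P := xpredT)).
  by rewrite m0 mul0r big1 // => t _; rewrite qz mul0r.
have mg : 0 < m by rewrite lt_def mn0 sumr_ge0.
have pos_p t : q t != 0 -> 0 < p t.
  by move=> qn; rewrite lt_def p0 andbT; apply: contra qn => /eqP/qp ->.
have [t0 /andP[_ qt0]] : exists t, true && (0 < q t).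
  by apply: psumr_neq0P => //; apply/eqP.
have Sg : 0 < S.
  have pt0 := pos_p t0 (lt0r_neq0 qt0).
  rewrite /S (bigD1 t0) ?lt0r_neq0 //= ltr_pwDl ?(mulr_gt0 pt0 (expR_gt0 _)) //.
  by apply: sumr_ge0 => t _; rewrite mulr_ge0 ?expR_ge0.
(* [b] is [p] tilted by [expR \o f] and rescaled to the mass [m] of [q]:
   termwise [q ln (b / q) <= b - q], and [b] and [q] both sum to [m]. *)
pose b t := (if p t != 0 then p t * expR (f t) else 0) * m / S.
have sum_b : \sum_t b t = m.
  by rewrite -!mulr_suml -big_mkcond -/S mulrAC divff ?mul1r // gt_eqF.
suff : \sum_t (q t * (f t - ln (q t / p t)) - q t * ln (S / m)) <= \sum_t (b t - q t).
  by rewrite !sumrB sum_b subrr -mulr_suml subr_le0.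
apply: ler_sum => t _.
have [qz|qn] := eqVneq (q t) 0.
  rewrite qz !mul0r subr0 subr0 /b; case: ifP => _; last by rewrite !mul0r.
  by rewrite mulr_ge0 ?invr_ge0 ?mulr_ge0 ?expR_ge0 ?(ltW mg) ?(ltW Sg).
have pg := pos_p t qn; have qg : 0 < q t by rewrite lt_def qn q0.
have -> : q t * (f t - ln (q t / p t)) - q t * ln (S / m) = q t * ln (b t / q t).
  rewrite -mulrBr /b gt_eqF //.
  by rewrite !ln_div ?lnM ?expRK ?posrE ?mulr_gt0 ?divr_gt0 ?invr_gt0 ?expR_gt0 //; ring.
apply: mul_ln_div_le => //; first by rewrite /b gt_eqF // ltW // !divr_gt0 ?mulr_gt0 ?expR_gt0.
by rewrite /b gt_eqF // => /eqP; rewrite !mulf_eq0 !invr_eq0 !gt_eqF ?expR_gt0.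
Qed.

Lemma gibbs_variational1 q p f :
  (forall t, 0 <= q t) -> (forall t, 0 <= p t) -> (forall t, p t = 0 -> q t = 0) ->
  \sum_t q t = 1 ->
  \sum_t q t * f t - relent q p <= ln (\sum_(t | p t != 0) p t * expR (f t)).
Proof.
move=> q0 p0 qp q1; rewrite relentE -sumrB; under eq_bigr do rewrite -mulrBr.
by have := gibbs_variational _ _ f q0 p0 qp; rewrite q1 mul1r divr1.
Qed.

Lemma relent_ge0 q p :
  (forall t, 0 <= q t) -> (forall t, 0 <= p t) -> (forall t, p t = 0 -> q t = 0) ->
  \sum_t q t = 1 -> \sum_t p t = 1 -> 0 <= relent q p.
Proof.
move=> q0 p0 qp q1 p1; have := gibbs_variational1 _ _ (fun=> 0) q0 p0 qp q1.
have -> : \sum_(t | p t != 0) p t * expR 0 = 1.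
  rewrite -p1 [RHS](bigID (fun t => p t != 0)) /= [X in _ + X]big1 ?addr0 => [|t /negPn/eqP //].
  by apply: eq_bigr => t _; rewrite expR0 mulr1.
by rewrite big1 ?ln1 ?sub0r ?oppr_le0 // => t _; rewrite mulr0.
Qed.

Lemma ln_sqrtr (x : R) : 0 < x -> ln (Num.sqrt x) = ln x / 2.
Proof. by move=> x0; rewrite -{2}(sqr_sqrtr (ltW x0)) lnXn ?sqrtr_gt0 // mulr2n; field. Qed.

Lemma gibbs_variational_sqrt q p s :
  (forall t, 0 <= q t) -> (forall t, 0 <= p t) -> (forall t, p t = 0 -> q t = 0) ->
  \sum_t q t = 1 -> (forall t, p t != 0 -> 0 < s t) ->
  \sum_t q t * ln (s t / q t) - relent q p <=
  2 * ln (\sum_(t | p t != 0) p t * Num.sqrt (s t / p t)).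
Proof.
move=> q0 p0 qp q1 s0.
have pos_p t : p t != 0 -> 0 < p t by move=> pn; rewrite lt_def pn p0.
have := gibbs_variational1 _ _ (fun t => ln (Num.sqrt (s t / p t))) q0 p0 qp q1.
have -> : \sum_(t | p t != 0) p t * expR (ln (Num.sqrt (s t / p t))) =
          \sum_(t | p t != 0) p t * Num.sqrt (s t / p t).
  by apply: eq_bigr => t pn; rewrite lnK ?posrE ?sqrtr_gt0 ?divr_gt0 ?s0 ?pos_p.
move=> /(ler_wpM2l (ler0n _ 2)); apply: le_trans; rewrite le_eqVlt; apply/orP; left.
rewrite relentE -!sumrB mulr_sumr; apply/eqP/eq_bigr => t _.
have [->|qn] := eqVneq (q t) 0; first by rewrite !mul0r subr0 mulr0.
have pn : p t != 0 by apply: contra qn => /eqP/qp ->.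
have qg : 0 < q t by rewrite lt_def qn q0.
by rewrite ln_sqrtr ?divr_gt0 ?s0 ?pos_p // !ln_div ?posrE ?s0 ?pos_p //; field.
Qed.
End Gibbs.

Section Marginal.
Context {R : realType} {X Y : finType}.
Implicit Types (Q : X * Y -> R).

Lemma sum_pairYX Q : \sum_p Q p = \sum_y \sum_x Q (x, y).
Proof. by rewrite exchange_big pair_bigA /=; apply: eq_bigr => -[]. Qed.

Lemma sum_margY Q (F : Y -> R) : \sum_y margY Q y * F y = \sum_p Q p * F p.2.
Proof. by rewrite sum_pairYX; apply: eq_bigr => y _; rewrite mulr_suml. Qed.

Lemma margY_sum1 {Q} : \sum_p Q p = 1 -> \sum_y margY Q y = 1.
Proof. by rewrite sum_pairYX. Qed.

Lemma margY_ge0 {Q} : (forall p, 0 <= Q p) -> forall y, 0 <= margY Q y.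
Proof. by move=> Q0 y; apply: sumr_ge0. Qed.

Lemma margY_gt0 {Q} x y : (forall p, 0 <= Q p) -> 0 < Q (x, y) -> 0 < margY Q y.
Proof.
move=> Q0 Qg; rewrite lt_def margY_ge0 // andbT; apply/eqP => /psumr_eq0P Qz.
by move: Qg; rewrite Qz ?ltxx.
Qed.

End Marginal.

Section Channel.
Context {R : realType} {X Y : finType}.
Variables (PX : X -> R) (W : X -> Y -> R).
Hypotheses (PX0 : forall x, 0 <= PX x) (PX1 : \sum_x PX x = 1).
Hypotheses (W0 : forall x y, 0 <= W x y) (W1 : forall x, \sum_y W x y = 1).
Variable Q : X * Y -> R.
Hypotheses (Q0 : forall p, 0 <= Q p) (Q1 : \sum_p Q p = 1).
Hypothesis QP : forall p, PXY PX W p = 0 -> Q p = 0.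

Local Notation P := (PXY PX W).
Local Notation PY := (margY P).
Local Notation QY := (margY Q).
Local Notation i := (idens PX W).

Lemma PXY_ge0 p : 0 <= P p.
Proof. exact: mulr_ge0. Qed.

Lemma PXY_sum1 : \sum_p P p = 1.
Proof.
rewrite -PX1 -(pair_bigA _ (fun x y => PX x * W x y)) /=.
by apply: eq_bigr => x _; rewrite -mulr_sumr W1 mulr1.
Qed.

Lemma PXY_gt0 p : Q p != 0 -> 0 < P p.
Proof. by move=> Qn; rewrite lt_def PXY_ge0 andbT; apply: contra Qn => /eqP/QP ->. Qed.

Lemma margY_PXY_dominates y : PY y = 0 -> QY y = 0.
Proof.
move=> /eqP; apply: contraTeq => /eqP /(psumr_neq0P (fun x _ => Q0 (x, y))) [x /= Qg].
by rewrite gt_eqF // (margY_gt0 x y PXY_ge0) // PXY_gt0 // gt_eqF.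
Qed.

Lemma relent_prodXY_margY :
  relent Q (prodXY PX QY) = relent Q P + \sum_p Q p * i p - relent QY PY.
Proof.
rewrite !relentE sum_margY -big_split -sumrB; apply: eq_bigr => -[x y] _ /=.
have [->|Qn] := eqVneq (Q (x, y)) 0; first by rewrite !mul0r subr0 addr0.
have Qg : 0 < Q (x, y) by rewrite lt_def Qn Q0.
have Pg := PXY_gt0 _ Qn.
have PXg : 0 < PX x by rewrite lt_def PX0 andbT; apply: contraTneq Pg => z;
  by rewrite /PXY /= z mul0r ltxx.
have Wg : 0 < W x y by rewrite lt_def W0 andbT; apply: contraTneq Pg => z;
  by rewrite /PXY /= z mulr0 ltxx.
have PYg := margY_gt0 x y PXY_ge0 Pg; have QYg := margY_gt0 x y Q0 Qg.
rewrite /idens /prodXY /PXY /= in PYg *.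
by rewrite !ln_div ?lnM ?posrE ?mulr_gt0 ?divr_gt0 //; ring.
Qed.

Lemma relent_PXY_ge0 : 0 <= relent Q P.
Proof. exact: relent_ge0 Q0 PXY_ge0 QP Q1 PXY_sum1. Qed.

Lemma renyiD_ge lam : lam * (\sum_p Q p * i p) - relent Q P <= lam * renyiD PX W lam.
Proof.
rewrite /renyiD; have [->|lamn] := eqVneq lam 0.
  by rewrite !mul0r sub0r oppr_le0 relent_PXY_ge0.
rewrite [leRHS]mulrC divfK // mulr_sumr.
under eq_bigr do rewrite mulrCA.
exact: gibbs_variational1 Q0 PXY_ge0 QP Q1.
Qed.

Lemma lamDtilde_ge lam' :
  lam' * (\sum_p Q p * i p) - relent Q P - relent QY PY <= lamDtilde PX W lam'.
Proof.
pose S y := \sum_(x | P (x, y) != 0) P (x, y) * expR (lam' * i (x, y)).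
have S_gt0 y : PY y != 0 -> 0 < S y.
  move=> /eqP/(psumr_neq0P (fun x _ => PXY_ge0 (x, y))) [x /= Pg].
  rewrite /S (bigD1 x) ?lt0r_neq0 //= ltr_pwDl ?(mulr_gt0 Pg (expR_gt0 _)) //.
  by apply: sumr_ge0 => x' _; rewrite mulr_ge0 ?expR_ge0 ?PXY_ge0.
have cond_gibbs : lam' * (\sum_p Q p * i p) - relent Q P <= \sum_y QY y * ln (S y / QY y).
  rewrite mulr_sumr relentE -sumrB sum_pairYX; apply: ler_sum => y _.
  under eq_bigr do rewrite mulrCA -mulrBr.
  exact: gibbs_variational (fun x => Q0 (x, y)) (fun x => PXY_ge0 (x, y)) (fun x => QP (x, y)).
have := gibbs_variational_sqrt _ _ S (margY_ge0 Q0) (margY_ge0 PXY_ge0)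
  margY_PXY_dominates (margY_sum1 Q1) S_gt0.
have -> : lamDtilde PX W lam' = 2 * ln (\sum_(y | PY y != 0) PY y * Num.sqrt (S y / PY y)).
  rewrite /lamDtilde /=; congr (_ * ln _); apply: eq_bigr => y _; congr (_ * Num.sqrt _).
  by rewrite mulr_suml; apply: eq_bigr => x _; rewrite mulrAC.
lra.
Qed.

End Channel.

Lemma beta_le_alpha_of_bounds (R : realType) (Rt lam lam' r t D E DY : R) :
  0 <= lam -> lam' <= 1 -> 0 <= D ->
  lam * E - D <= lam * r -> lam' * E - D - DY <= t ->
  lam / (2 * lam + 1 - lam') * (Rt - (1 - lam') * r - t) <=
  D + 2^-1 * Num.max 0 (Rt - (D + E - DY)).
Proof.
move=> lam0 lam'1 D0 hr ht; set M := Num.max 0 _.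
have M0 : 0 <= M by rewrite le_max lexx.
have MR : Rt - (D + E - DY) <= M by rewrite le_max lexx orbT.
have [->|lamn] := eqVneq lam 0.
  by rewrite !mul0r addr_ge0 // mulr_ge0 // invr_ge0.
have lamg : 0 < lam by rewrite lt_def lamn lam0.
have c0 : 0 < 2 * lam + 1 - lam' by lra.
rewrite mulrAC ler_pdivrMr //.
have h1 : 0 <= (1 - lam') * (lam * r - (lam * E - D)) by apply: mulr_ge0; lra.
have h2 : 0 <= lam * (t - (lam' * E - D - DY)) by apply: mulr_ge0; lra.
have h3 : 0 <= (1 - lam') * M by apply: mulr_ge0; lra.
have h4 : 0 <= lam * (M - (Rt - (D + E - DY))) by apply: mulr_ge0; lra.
nra.
Qed.

Theorem proposition3 (R : realType) (X Y : finType)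
  (PX : X -> R) (W : X -> Y -> R) (Rt : R) :
  (forall x, 0 <= PX x) -> \sum_(x : X) PX x = 1 ->
  (forall x y, 0 <= W x y) -> (forall x, \sum_(y : Y) W x y = 1) ->
  0 < MI PX W -> MI PX W < Rt ->
  (* alpha >= beta : every value in the min is >= every value in the max *)
  forall Q : X * Y -> R,
    (forall p, 0 <= Q p) -> \sum_(p : X * Y) Q p = 1 ->
    (forall p, PXY PX W p = 0 -> Q p = 0) ->
  forall lam lam' : R, 0 <= lam -> lam' <= 1 ->
    beta_obj PX W Rt lam lam' <= alpha_obj PX W Rt Q.
Proof.
move=> PX0 PX1 W0 W1 _ _ Q Q0 Q1 QP lam lam' lam0 lam'1.
(* The bound holds for every [Rt]. *)
rewrite /alpha_obj (relent_prodXY_margY _ W) //.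
apply: beta_le_alpha_of_bounds => //.
- exact: relent_PXY_ge0.
- exact: renyiD_ge.
- exact: lamDtilde_ge.
Qed.
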